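(* Let $L$ and $L'$ be oriented flat virtual link diagrams such that $L$ can be transformed into $L'$ by one flat Reidemeister move. Then the fundamental virtual flat biquandles $VFB(L)$ and $VFB(L')$ are isomorphic as virtual flat biquandles.
   Context: A flat virtual link diagram is a virtual link diagram in which every real crossing is replaced by a flat crossing (no over/under information); crossings are either flat or virtual. Flat Reidemeister moves are the generalized Reidemeister moves ($\Omega_1,\Omega_2,\Omega_3$, the virtual moves $\Omega_1',\Omega_2',\Omega_3'$, and the mixed move $\Omega_3^s$ where a strand with two virtual crossings passes across another crossing) with all real crossings replaced by flat crossings; flat virtual links are equivalence classes of diagrams under these moves. A virtual flat biquandle is a set $X$ with two binary operations $a\ast b$ and $a\circ b$; writing $S_b(a)=a\ast b$ and $T_b(a)=a\circ b$, the maps $S_a,T_a:X\to X$ must satisfy, for all $a,b\in X$: (1) $S_aS_b=S_bS_a$, $T_aT_b=T_bT_a$, $S_aT_b=T_bS_a$; (2) $S_a=S_{T_b(a)}=S_{S_b(a)}$ and $T_a=T_{S_b(a)}=T_{T_b(a)}$; (3) $T_aS_a=S_aT_a=\mathrm{id}$. Homomorphisms preserve both operations. A v-arc of a diagram is a part of the diagram from one virtual crossing to the next virtual crossing (flat crossings are passed through; a component with no virtual crossings is a single v-arc). The fundamental virtual flat biquandle $VFB(L)$ is the virtual flat biquandle generated by the v-arcs of $L$ subject to the following relation at each virtual crossing: after rotating so both strands are oriented downward, if the incoming v-arc on the upper left is $a$ and the incoming v-arc on the upper right is $b$, then the outgoing v-arc continuing the strand from the upper left (exiting at lower right) equals $a\ast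 b$ and the outgoing v-arc continuing the strand from the upper right (exiting at lower left) equals $b\circ a$. No relations are imposed at flat crossings. *)

From Stdlib Require Import ClassicalEpsilon.
From mathcomp Require Import all_boot.

Set Implicit Arguments.
Unset Strict Implicit.
Unset Printing Implicit Defensive.

(* A diagram is a 4-valent/2-valent ribbon graph on the sphere:              *)
(*  - crossings  c : dC, each with 4 half-edges (darts) (c,i), i : 'I_4,     *)
(*    numbered COUNTERCLOCKWISE; opposite darts (c,i),(c,i+2) belong to the  *)
(*    same strand; dvirt c = true iff c is a virtual crossing, otherwise it  *)
(*    is a flat crossing;                                                    *)
(*  - "points"  p : dP, i.e. 2-valent dummy vertices subdividing an edge     *)
(*    (darts (p,false), (p,true)); they carry no geometric meaning and are   *)
(*    used to represent crossingless circles and the boundary of the disk    *)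
(*    in which a move takes place;                                           *)
(*  - dalpha : the edge involution (pairs the two ends of each edge);        *)
(*  - dout d = true iff the edge at dart d is oriented away from its vertex. *)

Notation dart C P := ((C * 'I_4) + (P * bool))%type.

Definition rot4 (i : 'I_4) : 'I_4 := inord (i.+1 %% 4).
Definition refl4 (i : 'I_4) : 'I_4 := inord ((4 - i) %% 4).

Record diagram := Diagram {
  dC : finType;
  dP : finType;
  dvirt : dC -> bool;
  dalpha : dart dC dP -> dart dC dP;
  dout : dart dC dP -> bool }.
Arguments dvirt : clear implicits.
Arguments dalpha : clear implicits.
Arguments dout : clear implicits.

Definition sigma (C P : Type) (d : dart C P) : dart C P :=
  match d with
  | inl (c, i) => inl (c, rot4 i)
  | inr (p, b) => inr (p, ~~ b)
  end.

Definition face_perm (D : diagram) (d : dart (dC D) (dP D)) : dart (dC D) (dP D) :=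
  sigma (dalpha D d).

Definition adj (D : diagram) : rel (dart (dC D) (dP D)) :=
  fun x y => (y == sigma x) || (y == dalpha D x).

Arguments face_perm : clear implicits.
Arguments adj : clear implicits.

(* Euler characteristic 2 on every connected component:
   V - E + F = 2K with V = #C + #P, E = 2 #C + #P. *)
Definition is_planar (D : diagram) : bool :=
  fcard (face_perm D) predT == #|dC D| + 2 * n_comp (adj D) predT.

Definition is_diagram (D : diagram) : Prop :=
  [/\ (forall d, dalpha D (dalpha D d) = d),
      (forall d, dalpha D d != d),
      (forall d, dout D (dalpha D d) = ~~ dout D d),
      ((forall c i, dout D (inl (c, rot4 (rot4 i))) = ~~ dout D (inl (c, i))) /\
       (forall p, dout D (inr (p, true)) = ~~ dout D (inr (p, false))))
    & is_planar D].

Definition diag_iso (D1 D2 : diagram) : Prop :=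
  exists (fC : dC D1 -> dC D2) (fP : dP D1 -> dP D2)
         (r : dC D1 -> nat) (s : dP D1 -> bool),
    let f := fun d : dart (dC D1) (dP D1) =>
      match d with
      | inl (c, i) => inl (fC c, iter (r c) rot4 i)
      | inr (p, b) => inr (fP p, s p (+) b)
      end : dart (dC D2) (dP D2) in
    [/\ bijective fC, bijective fP,
        (forall c, dvirt D2 (fC c) = dvirt D1 c),
        (forall d, dalpha D2 (f d) = f (dalpha D1 d))
      & (forall d, dout D2 (f d) = dout D1 d)].

(* Tangles with n boundary points (numbered counterclockwise) and gluing.    *)
(* A boundary point j is a dart "inr j"; in the glued diagram it becomes a   *)
(* 2-valent point whose dart "true" lies on the inner side (T) and whose     *)
(* dart "false" lies on the outer side (O).                                  *)

Record tangle (n : nat) := Tangle {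
  tC : finType;
  tP : finType;
  tvirt : tC -> bool;
  talpha : (dart tC tP + 'I_n)%type -> (dart tC tP + 'I_n)%type }.
Arguments talpha {n} t _.
Arguments tvirt {n} t _.

Section Glue.
Variables (n : nat) (O : tangle n) (oO : (dart (tC O) (tP O) + 'I_n)%type -> bool)
          (T : tangle n) (oT : (dart (tC T) (tP T) + 'I_n)%type -> bool).

Definition gC : finType := (tC O + tC T)%type.
Definition gP : finType := ((tP O + tP T) + 'I_n)%type.

Definition embO (x : (dart (tC O) (tP O) + 'I_n)%type) : dart gC gP :=
  match x with
  | inl (inl (c, i)) => inl (inl c, i)
  | inl (inr (p, b)) => inr (inl (inl p), b)
  | inr j => inr (inr j, false)
  end.

Definition embT (x : (dart (tC T) (tP T) + 'I_n)%type) : dart gC gP :=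
  match x with
  | inl (inl (c, i)) => inl (inr c, i)
  | inl (inr (p, b)) => inr (inl (inr p), b)
  | inr j => inr (inr j, true)
  end.

Definition galpha (g : dart gC gP) : dart gC gP :=
  match g with
  | inl (inl c, i) => embO (talpha O (inl (inl (c, i))))
  | inl (inr c, i) => embT (talpha T (inl (inl (c, i))))
  | inr (inl (inl p), b) => embO (talpha O (inl (inr (p, b))))
  | inr (inl (inr p), b) => embT (talpha T (inl (inr (p, b))))
  | inr (inr j, false) => embO (talpha O (inr j))
  | inr (inr j, true) => embT (talpha T (inr j))
  end.

Definition gout (g : dart gC gP) : bool :=
  match g with
  | inl (inl c, i) => oO (inl (inl (c, i)))
  | inl (inr c, i) => oT (inl (inl (c, i)))
  | inr (inl (inl p), b) => oO (inl (inr (p, b)))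
  | inr (inl (inr p), b) => oT (inl (inr (p, b)))
  | inr (inr j, false) => oO (inr j)
  | inr (inr j, true) => oT (inr j)
  end.

Definition gvirt (c : gC) : bool :=
  match c with inl c => tvirt O c | inr c => tvirt T c end.

Definition glue : diagram := @Diagram gC gP gvirt galpha gout.
End Glue.
Arguments glue : clear implicits.

(* mirror image of a tangle: reverse the cyclic order at every crossing *)
Definition mref (n : nat) (C P : Type) (d : (dart C P + 'I_n)%type) : (dart C P + 'I_n)%type :=
  match d with
  | inl (inl (c, i)) => inl (inl (c, refl4 i))
  | _ => d
  end.

Definition mirror n (T : tangle n) : tangle n :=
  @Tangle n (tC T) (tP T) (tvirt T) (fun d => mref (talpha T (mref d))).

(* Standard local pictures, given by tables.  A tangle with k crossings and  *)
(* n boundary points: dart (c,i) has code 4c+i, boundary point j has code    *)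
(* 4k+j; the edges are given as a list of pairs of codes.                    *)

Definition code k n (d : (dart 'I_k 'I_0 + 'I_n)%type) : nat :=
  match d with
  | inl (inl (c, i)) => 4 * c + i
  | inl (inr _) => 0
  | inr j => 4 * k + j
  end.

Definition decode k n (y : nat) : option (dart 'I_k 'I_0 + 'I_n)%type :=
  if y < 4 * k then omap (fun c : 'I_k => inl (inl (c, inord (y %% 4)))) (insub (y %/ 4))
  else omap (fun j : 'I_n => inr j) (insub (y - 4 * k)).

Definition partner (s : seq (nat * nat)) (x : nat) : option nat :=
  match [seq e <- s | (e.1 == x) || (e.2 == x)] with
  | e :: _ => Some (if e.1 == x then e.2 else e.1)
  | [::] => None
  end.

Definition table_tangle k n (kind : 'I_k -> bool) (s : seq (nat * nat)) : tangle n :=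
  @Tangle n 'I_k 'I_0 kind
    (fun d => odflt d (obind (@decode k n) (partner s (code d)))).

Definition kink (v : bool) : tangle 2 :=
  @table_tangle 1 2 (fun _ => v) [:: (2, 3); (4, 0); (5, 1)].
Definition arc1 : tangle 2 := @table_tangle 0 2 (fun _ => false) [:: (0, 1)].

(* Omega_2 : a bigon (both crossings flat, or both virtual) vs. two arcs;
   boundary points 0,1,2,3 = top-left, bottom-left, bottom-right, top-right. *)
Definition bigon (v : bool) : tangle 4 :=
  @table_tangle 2 4 (fun _ => v)
    [:: (8, 0); (11, 3); (1, 4); (2, 7); (5, 9); (6, 10)].
Definition arcs2 : tangle 4 :=
  @table_tangle 0 4 (fun _ => false) [:: (0, 1); (2, 3)].

(* Omega_3 : three strands joining boundary points 0-3, 1-4, 2-5; crossing 0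
   (X) is between strands 1-4 and 2-5, crossings 1 (Y) and 2 (Z) lie on the
   moving strand 0-3.  tri / tri' are the two sides of the triple point. *)
Definition tri (kind : 'I_3 -> bool) : tangle 6 :=
  @table_tangle 3 6 kind
    [:: (0, 7); (1, 11); (2, 16); (3, 17); (4, 12); (5, 13); (6, 8); (9, 14); (10, 15)].
Definition tri' (kind : 'I_3 -> bool) : tangle 6 :=
  @table_tangle 3 6 kind
    [:: (0, 13); (1, 14); (2, 5); (3, 9); (4, 10); (6, 15); (7, 16); (8, 12); (11, 17)].

Inductive std_move : forall n, tangle n -> tangle n -> Prop :=
  | Om1  : std_move (kink false) arc1
  | Om1v : std_move (kink true) arc1
  | Om2  : std_move (bigon false) arcs2
  | Om2v : std_move (bigon true) arcs2
  | Om3  : std_move (tri (fun _ => false)) (tri' (fun _ => false))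
  | Om3v : std_move (tri (fun _ => true)) (tri' (fun _ => true))
  | Om3s : std_move (tri (fun c => c != ord0)) (tri' (fun c => c != ord0)).

Inductive move_pair : forall n, tangle n -> tangle n -> Prop :=
  | mp_std n (T T' : tangle n) : std_move T T' -> move_pair T T'
  | mp_sym n (T T' : tangle n) : move_pair T T' -> move_pair T' T
  | mp_mir n (T T' : tangle n) : move_pair T T' -> move_pair (mirror T) (mirror T').

(* L' is obtained from L by one flat Reidemeister move: both are obtained by
   gluing the same (oriented) outside O to the two sides of a move. *)
Definition flat_move (L L' : diagram) : Prop :=
  exists n (O T T' : tangle n)
    (oO : (dart (tC O) (tP O) + 'I_n)%type -> bool)
    (oT : (dart (tC T) (tP T) + 'I_n)%type -> bool)
    (oT' : (dart (tC T') (tP T') + 'I_n)%type -> bool),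
    [/\ move_pair T T', diag_iso (glue n O oO T oT) L & diag_iso (glue n O oO T' oT') L'].

Definition is_vfb (X : Type) (star circ : X -> X -> X) : Prop :=
  (forall a b x, star (star x b) a = star (star x a) b) /\
  (forall a b x, circ (circ x b) a = circ (circ x a) b) /\
  (forall a b x, star (circ x b) a = circ (star x a) b) /\
  (forall a b x, star x a = star x (circ a b) /\ star x a = star x (star a b)) /\
  (forall a b x, circ x a = circ x (star a b) /\ circ x a = circ x (circ a b)) /\
  (forall a x, circ (star x a) a = x /\ star (circ x a) a = x).

Definition vfb_iso (X Y : Type) (sX cX : X -> X -> X) (sY cY : Y -> Y -> Y) : Prop :=
  exists f : X -> Y, [/\ bijective f,
    (forall a b, f (sX a b) = sY (f a) (f b)) &
    (forall a b, f (cX a b) = cY (f a) (f b))].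

Inductive term (G : Type) :=
  | Gen of G
  | Star of term G & term G
  | Circ of term G & term G.

Section FundamentalVFB.
Variable D : diagram.
Notation G := (dart (dC D) (dP D)).
Notation UL c i := (Gen (inl (c, i)) : term G).
Notation LL c i := (Gen (inl (c, rot4 i)) : term G).
Notation LR c i := (Gen (inl (c, rot4 (rot4 i))) : term G).
Notation UR c i := (Gen (inl (c, rot4 (rot4 (rot4 i)))) : term G).

(* Generators: darts (ends of edges); edges identified along a v-arc, i.e.
   through flat crossings and 2-valent points; relations at virtual
   crossings: with both strands oriented downwards, UL,UR incoming, LL,LR
   outgoing (ccw order UL, LL, LR, UR); UL is the incoming dart whose ccw
   successor is outgoing. *)
Inductive vcong : term G -> term G -> Prop :=
  | vc_refl t : vcong t t
  | vc_sym t u : vcong t u -> vcong u t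
  | vc_trans t u w : vcong t u -> vcong u w -> vcong t w
  | vc_star a a' b b' : vcong a a' -> vcong b b' -> vcong (Star a b) (Star a' b')
  | vc_circ a a' b b' : vcong a a' -> vcong b b' -> vcong (Circ a b) (Circ a' b')
  | ax_SS a b x : vcong (Star (Star x b) a) (Star (Star x a) b)
  | ax_TT a b x : vcong (Circ (Circ x b) a) (Circ (Circ x a) b)
  | ax_ST a b x : vcong (Star (Circ x b) a) (Circ (Star x a) b)
  | ax_S_T a b x : vcong (Star x a) (Star x (Circ a b))
  | ax_S_S a b x : vcong (Star x a) (Star x (Star a b))
  | ax_T_S a b x : vcong (Circ x a) (Circ x (Star a b))
  | ax_T_T a b x : vcong (Circ x a) (Circ x (Circ a b))
  | ax_TS a x : vcong (Circ (Star x a) a) x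
  | ax_ST' a x : vcong (Star (Circ x a) a) x
  | rel_edge d : vcong (Gen d) (Gen (dalpha D d))
  | rel_point p : vcong (Gen (inr (p, false))) (Gen (inr (p, true)))
  | rel_flat c i : dvirt D c = false -> vcong (UL c i) (LR c i)
  | rel_virtS c i : dvirt D c -> dout D (inl (c, i)) = false ->
      dout D (inl (c, rot4 i)) = true -> vcong (LR c i) (Star (UL c i) (UR c i))
  | rel_virtT c i : dvirt D c -> dout D (inl (c, i)) = false ->
      dout D (inl (c, rot4 i)) = true -> vcong (LL c i) (Circ (UR c i) (UL c i)).

Definition VFB : Type := { A : term G -> Prop | exists t, A = vcong t }.

Definition vclass (t : term G) : VFB := exist _ (vcong t) (ex_intro _ t erefl).
Definition vrep (A : VFB) : term G :=
  proj1_sig (constructive_indefinite_description _ (proj2_sig A)).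

Definition vstar (A B : VFB) : VFB := vclass (Star (vrep A) (vrep B)).
Definition vcirc (A B : VFB) : VFB := vclass (Circ (vrep A) (vrep B)).
End FundamentalVFB.

(* Modulo the axioms alone, every term of a free virtual flat biquandle is
   x S_{h_1}^{n_1} ... S_{h_k}^{n_k} (with S^{-1} = T): the operators S_b, T_b
   only depend on the leftmost generator of b and generate a commuting group.
   So terms with the same root and exponent vector are congruent.  Rewriting
   each generator backwards along its v-arc by the relations at the virtual
   crossings turns this into a computable sufficient test for the congruence
   presenting VFB(D).
   A flat move replaces a tangle T by T' inside a disk.  Presentations are
   local: mutually inverse substitutions between the capped tangles that fix
   the boundary points extend by the identity to the glued diagrams.  For the
   seven standard moves, their mirror images and every orientation, such
   substitutions are obtained by this rewriting and checked by computation. *)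

From mathcomp Require Import all_boot.
From Stdlib Require Import BinInt Pnat Lia.
From Stdlib Require Import ClassicalEpsilon FunctionalExtensionality PropExtensionality ProofIrrelevance.

Set Implicit Arguments.
Unset Strict Implicit.
Unset Printing Implicit Defensive.

Notation darts D := (dart (dC D) (dP D)).

(** * Normal forms of terms *)

Fixpoint tsub (A B : Type) (f : A -> term B) (t : term A) : term B :=
  match t with
  | Gen a => f a
  | Star x y => Star (tsub f x) (tsub f y)
  | Circ x y => Circ (tsub f x) (tsub f y)
  end.

Lemma tsub_comp A B C (f : A -> term B) (g : B -> term C) t :
  tsub g (tsub f t) = tsub (fun x => tsub g (f x)) t.
Proof. by elim: t => //= x -> y ->. Qed.

Lemma eq_tsub A B (f g : A -> term B) t : f =1 g -> tsub f t = tsub g t.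
Proof. by move=> E; elim: t => //= x -> y ->. Qed.

Fixpoint troot (G : Type) (t : term G) : G :=
  match t with Gen g => g | Star x _ => troot x | Circ x _ => troot x end.

Fixpoint texp (G : eqType) (t : term G) (h : G) : Z :=
  match t with
  | Gen _ => 0%Z
  | Star x b => Z.add (texp x h) (if troot b == h then 1%Z else 0%Z)
  | Circ x b => Z.sub (texp x h) (if troot b == h then 1%Z else 0%Z)
  end.

Definition spow (G : Type) (a : term G) (h : G) (z : Z) : term G :=
  match z with
  | Z0 => a
  | Zpos p => iter (Pos.to_nat p) (fun x => Star x (Gen h)) a
  | Zneg p => iter (Pos.to_nat p) (fun x => Circ x (Gen h)) a
  end.

Definition nform (G : Type) (g : G) (v : G -> Z) (l : seq G) : term G :=
  foldr (fun h acc => spow acc h (v h)) (Gen g) l.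

Definition nf_eqb (G : eqType) (l : seq G) (a b : term G) : bool :=
  (troot a == troot b) && all (fun h => Z.eqb (texp a h) (texp b h)) l.

Section Congruence.
Variable D : diagram.
Notation G := (darts D).
Notation "a ~~> b" := (@vcong D a b) (at level 70).

Lemma vc_starl (a a' b : term G) : a ~~> a' -> Star a b ~~> Star a' b.
Proof. by move=> H; apply: vc_star => //; apply: vc_refl. Qed.
Lemma vc_starr (a b b' : term G) : b ~~> b' -> Star a b ~~> Star a b'.
Proof. by move=> H; apply: vc_star => //; apply: vc_refl. Qed.
Lemma vc_circl (a a' b : term G) : a ~~> a' -> Circ a b ~~> Circ a' b.
Proof. by move=> H; apply: vc_circ => //; apply: vc_refl. Qed.
Lemma vc_circr (a b b' : term G) : b ~~> b' -> Circ a b ~~> Circ a b'.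
Proof. by move=> H; apply: vc_circ => //; apply: vc_refl. Qed.

Lemma vc_tsub (h : G -> term G) t : (forall x, Gen x ~~> h x) -> t ~~> tsub h t.
Proof. by move=> H; elim: t => [g|x IHx y IHy|x IHx y IHy] /=; [|apply: vc_star|apply: vc_circ]. Qed.

Lemma vc_op_root (x b : term G) :
  Star x b ~~> Star x (Gen (troot b)) /\ Circ x b ~~> Circ x (Gen (troot b)).
Proof.
elim: b x => [g|b1 IH1 b2 _|b1 IH1 b2 _] x /=; first by split; apply: vc_refl.
- case: (IH1 x) => H1 H2; split.
  + by apply: vc_trans H1; apply: vc_sym; apply: ax_S_S.
  + by apply: vc_trans H2; apply: vc_sym; apply: ax_T_S.
- case: (IH1 x) => H1 H2; split.
  + by apply: vc_trans H1; apply: vc_sym; apply: ax_S_T.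
  + by apply: vc_trans H2; apply: vc_sym; apply: ax_T_T.
Qed.

Lemma vc_op_arg (x : term G) (b : G) (b' : term G) : Gen b ~~> b' ->
  Star x (Gen b) ~~> Star x (Gen (troot b')) /\ Circ x (Gen b) ~~> Circ x (Gen (troot b')).
Proof.
move=> H; case: (vc_op_root x b') => H1 H2; split.
- by apply: vc_trans H1; apply: vc_starr.
- by apply: vc_trans H2; apply: vc_circr.
Qed.

Lemma spow_cong a a' h z : a ~~> a' -> spow a h z ~~> spow a' h z.
Proof.
case: z => //= p; elim: (Pos.to_nat p) => //= m IH H.
  by apply: vc_starl; apply: IH.
by apply: vc_circl; apply: IH.
Qed.

Lemma spow_op_comm a h z k :
  Star (spow a h z) (Gen k) ~~> spow (Star a (Gen k)) h z /\
  Circ (spow a h z) (Gen k) ~~> spow (Circ a (Gen k)) h z.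
Proof.
case: z => [|p|p] /=; first by split; apply: vc_refl.
- elim: (Pos.to_nat p) => [|m [IH1 IH2]] /=; first by split; apply: vc_refl.
  split; apply: vc_trans (vc_starl _ _); [exact: ax_SS | exact: IH1 |
    by apply: vc_sym; apply: ax_ST | exact: IH2].
- elim: (Pos.to_nat p) => [|m [IH1 IH2]] /=; first by split; apply: vc_refl.
  split; apply: vc_trans (vc_circl _ _); [exact: ax_ST | exact: IH1 |
    exact: ax_TT | exact: IH2].
Qed.

Lemma spow_opS a h z :
  Star (spow a h z) (Gen h) ~~> spow a h (Z.add z 1) /\
  Circ (spow a h z) (Gen h) ~~> spow a h (Z.sub z 1).
Proof.
have [q Eq] : exists q, forall p, p <> 1%positive -> p = Pos.succ (q p).
  by exists Pos.pred => p np; rewrite Pos.succ_pred.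
case: z => [|p|p]; first by split; apply: vc_refl.
- split; first by rewrite /= Pos.add_1_r Pos2Nat.inj_succ; apply: vc_refl.
  case: (Pos.eq_dec p 1) => [->|/Eq ->]; first exact: ax_TS.
  have -> : Z.sub (Zpos (Pos.succ (q p))) 1 = Zpos (q p) by lia.
  by rewrite /= Pos2Nat.inj_succ; apply: ax_TS.
- split; last by rewrite /= Pos.add_1_r Pos2Nat.inj_succ; apply: vc_refl.
  case: (Pos.eq_dec p 1) => [->|/Eq ->]; first exact: ax_ST'.
  have -> : Z.add (Zneg (Pos.succ (q p))) 1 = Zneg (q p) by lia.
  by rewrite /= Pos2Nat.inj_succ; apply: ax_ST'.
Qed.

Lemma eq_nform_in g v v' (l : seq G) : {in l, v =1 v'} -> nform g v l = nform g v' l.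
Proof.
elim: l => //= k l IH H; rewrite IH ?H ?mem_head // => x Hx.
by apply: H; rewrite in_cons Hx orbT.
Qed.

Lemma nform_op g v (l : seq G) h : uniq l -> h \in l ->
  Star (nform g v l) (Gen h) ~~> nform g (fun k => if k == h then Z.add (v k) 1 else v k) l /\
  Circ (nform g v l) (Gen h) ~~> nform g (fun k => if k == h then Z.sub (v k) 1 else v k) l.
Proof.
elim: l => //= k l IH /andP [kl ul]; rewrite in_cons.
case: (eqVneq h k) => [-> _ | nk /= hl].
- have unchanged w : nform g (fun k0 => if k0 == k then w k0 else v k0) l = nform g v l.
    by apply: eq_nform_in => x xl; case: eqP => // ex; move: kl; rewrite -ex xl.
  by rewrite !unchanged; apply: spow_opS.
- case: (IH ul hl) => H1 H2.
  case: (spow_op_comm (nform g v l) k (v k) h) => C1 C2.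
  by split; [apply: vc_trans C1 (spow_cong _ _ H1) | apply: vc_trans C2 (spow_cong _ _ H2)].
Qed.

Lemma vc_nform (l : seq G) (t : term G) : uniq l -> (forall h, h \in l) ->
  t ~~> nform (troot t) (texp t) l.
Proof.
move=> ul Hl; elim: t => [g|x IHx b _|x IHx b _] /=.
- have -> : nform g (fun _ => 0%Z) l = Gen g by elim: l {ul Hl} => //= k l ->.
  exact: vc_refl.
- case: (vc_op_root x b) => H _; apply: vc_trans H (vc_trans (vc_starl _ IHx) _).
  case: (nform_op (troot x) (texp x) ul (Hl (troot b))) => S _; apply: vc_trans S _.
  rewrite (@eq_nform_in _ _ (fun h => Z.add (texp x h) (if troot b == h then 1%Z else 0%Z))).
    exact: vc_refl.
  by move=> k _; rewrite eq_sym; case: eqP => _ //; rewrite Z.add_0_r.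
- case: (vc_op_root x b) => _ H; apply: vc_trans H (vc_trans (vc_circl _ IHx) _).
  case: (nform_op (troot x) (texp x) ul (Hl (troot b))) => _ S; apply: vc_trans S _.
  rewrite (@eq_nform_in _ _ (fun h => Z.sub (texp x h) (if troot b == h then 1%Z else 0%Z))).
    exact: vc_refl.
  by move=> k _; rewrite eq_sym; case: eqP => _ //; rewrite Z.sub_0_r.
Qed.

Lemma nf_eqb_sound (l : seq G) (a b : term G) : (forall h, h \in l) -> nf_eqb l a b -> a ~~> b.
Proof.
move=> Hl /andP [/eqP Er /allP Ev].
have Hu : forall h, h \in undup l by move=> h; rewrite mem_undup.
apply: vc_trans (vc_nform a (undup_uniq l) Hu) (vc_sym _).
apply: vc_trans (vc_nform b (undup_uniq l) Hu) _.
rewrite Er (@eq_nform_in _ (texp a) (texp b)); first exact: vc_refl.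
by move=> h; rewrite mem_undup => /Ev /Z.eqb_eq.
Qed.
End Congruence.

(** * Substitutions between presentations *)

Definition vhom (D1 D2 : diagram) (f : darts D1 -> term (darts D2)) :=
  forall t u, @vcong D1 t u -> @vcong D2 (tsub f t) (tsub f u).
Arguments vhom : clear implicits.

Lemma vhom_rels (D1 D2 : diagram) (f : darts D1 -> term (darts D2)) :
  (forall d, @vcong D2 (f d) (f (dalpha D1 d))) ->
  (forall p, @vcong D2 (f (inr (p, false))) (f (inr (p, true)))) ->
  (forall c i, dvirt D1 c = false ->
     @vcong D2 (f (inl (c, i))) (f (inl (c, rot4 (rot4 i))))) ->
  (forall c i, dvirt D1 c -> dout D1 (inl (c, i)) = false -> dout D1 (inl (c, rot4 i)) = true ->
     @vcong D2 (f (inl (c, rot4 (rot4 i))))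
                (Star (f (inl (c, i))) (f (inl (c, rot4 (rot4 (rot4 i)))))) /\
     @vcong D2 (f (inl (c, rot4 i)))
                (Circ (f (inl (c, rot4 (rot4 (rot4 i))))) (f (inl (c, i))))) ->
  vhom D1 D2 f.
Proof.
move=> He Hp Hf Hv t u; elim=> /=;
  try by [constructor | move=> *; apply: vc_trans; eassumption].
- by move=> d; apply: He.
- by move=> p; apply: Hp.
- by move=> c i H; apply: Hf.
- by move=> c i H1 H2 H3; case: (Hv c i H1 H2 H3).
- by move=> c i H1 H2 H3; case: (Hv c i H1 H2 H3).
Qed.

Definition vequiv (D1 D2 : diagram) : Prop :=
  exists (f : darts D1 -> term (darts D2)) (g : darts D2 -> term (darts D1)),
  [/\ vhom D1 D2 f, vhom D2 D1 g,
      (forall x, @vcong D1 (tsub g (f x)) (Gen x)) &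
      (forall y, @vcong D2 (tsub f (g y)) (Gen y))].

Lemma vc_tsubK (D1 D2 : diagram) (f : darts D1 -> term (darts D2)) g t :
  (forall x, @vcong D1 (tsub g (f x)) (Gen x)) -> @vcong D1 (tsub g (tsub f t)) t.
Proof.
by move=> H; rewrite tsub_comp; apply: vc_sym; apply: vc_tsub => x; apply: vc_sym.
Qed.

Lemma vequiv_sym D1 D2 : vequiv D1 D2 -> vequiv D2 D1.
Proof. by case=> f [g [H1 H2 H3 H4]]; exists g, f. Qed.

Lemma vequiv_trans D1 D2 D3 : vequiv D1 D2 -> vequiv D2 D3 -> vequiv D1 D3.
Proof.
case=> f [g [F1 G1 R1 S1]] [f' [g' [F2 G2 R2 S2]]].
exists (fun x => tsub f' (f x)), (fun z => tsub g (g' z)); split.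
- by move=> t u H; rewrite -!tsub_comp; apply/F2/F1.
- by move=> t u H; rewrite -!tsub_comp; apply/G1/G2.
- move=> x; rewrite -tsub_comp; apply: vc_trans (R1 x).
  by apply: G1; apply: vc_tsubK.
- move=> y; rewrite -tsub_comp; apply: vc_trans (S2 y).
  by apply: F2; apply: vc_tsubK.
Qed.

Section Quotient.
Variable D : diagram.

Lemma vclass_eq (t u : term (darts D)) : vcong t u -> vclass t = vclass u.
Proof.
move=> H; apply: eq_sig_hprop => [? ? ?|/=]; first exact: proof_irrelevance.
apply: functional_extensionality => x; apply: propositional_extensionality.
by split; [apply: vc_trans (vc_sym H) | apply: vc_trans H].
Qed.

Lemma vrep_spec (A : VFB D) : proj1_sig A = @vcong D (vrep A).
Proof. by rewrite /vrep; case: constructive_indefinite_description. Qed.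

Lemma vrepK (A : VFB D) : vclass (vrep A) = A.
Proof.
by apply: eq_sig_hprop => [? ? ?|]; [apply: proof_irrelevance | rewrite /= -vrep_spec].
Qed.

Lemma vc_vrep (t : term (darts D)) : vcong (vrep (vclass t)) t.
Proof. by have := vrep_spec (vclass t); rewrite /= => <-; apply: vc_refl. Qed.
End Quotient.

Lemma vequiv_iso D1 D2 : vequiv D1 D2 ->
  vfb_iso (@vstar D1) (@vcirc D1) (@vstar D2) (@vcirc D2).
Proof.
case=> f [g [F G R S]].
have vc_tsub_vrep D D' (h : darts D -> term (darts D')) t :
    vhom D D' h -> vcong (tsub h (vrep (vclass t))) (tsub h t).
  by move=> Hh; apply/Hh/vc_vrep.
exists (fun A => vclass (tsub f (vrep A))); split.
- exists (fun A => vclass (tsub g (vrep A))) => A; rewrite -[RHS]vrepK; apply: vclass_eq.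
  + by apply: vc_trans (vc_tsub_vrep _ _ _ _ G) _; apply: vc_tsubK.
  + by apply: vc_trans (vc_tsub_vrep _ _ _ _ F) _; apply: vc_tsubK.
- move=> A B; apply: vclass_eq; apply: vc_trans (vc_tsub_vrep _ _ _ _ F) _.
  by apply: vc_star; apply: vc_sym; apply: vc_vrep.
- move=> A B; apply: vclass_eq; apply: vc_trans (vc_tsub_vrep _ _ _ _ F) _.
  by apply: vc_circ; apply: vc_sym; apply: vc_vrep.
Qed.

(** * Isomorphic diagrams *)

Lemma val_rot4 (i : 'I_4) : val (rot4 i) = (i.+1 %% 4)%N.
Proof. by rewrite /rot4; apply: inordK; rewrite ltn_mod. Qed.

Lemma rot4_4 (i : 'I_4) : rot4 (rot4 (rot4 (rot4 i))) = i.
Proof. by apply: val_inj; rewrite !val_rot4; case: i => [[|[|[|[|m]]]] Hm]. Qed.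

Lemma iter_rot4_4 m (i : 'I_4) : iter (4 * m) rot4 i = i.
Proof. by elim: m => // m IH; rewrite mulnS iterD IH /= rot4_4. Qed.

Definition dart_iso (D1 D2 : diagram) (h : darts D1 -> darts D2) :=
  [/\ forall d, h (sigma d) = sigma (h d),
      forall d, h (dalpha D1 d) = dalpha D2 (h d),
      forall d, dout D2 (h d) = dout D1 d,
      forall c i, exists c' i', h (inl (c, i)) = inl (c', i') /\ dvirt D2 c' = dvirt D1 c &
      forall p b, exists p' b', h (inr (p, b)) = inr (p', b')].
Arguments dart_iso : clear implicits.

Lemma diag_iso_dart D1 D2 : diag_iso D1 D2 ->
  exists h h', [/\ dart_iso D1 D2 h, cancel h h' & cancel h' h].
Proof.
case=> fC [fP [r [s [[gC KC1 KC2] [gP KP1 KP2] Hv Ha Ho]]]].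
exists (fun d => match d with
                | inl (c, i) => inl (fC c, iter (r c) rot4 i)
                | inr (p, b) => inr (fP p, s p (+) b)
                end : darts D2).
exists (fun d => match d with
                | inl (c, i) => inl (gC c, iter (3 * r (gC c)) rot4 i)
                | inr (p, b) => inr (gP p, s (gP p) (+) b)
                end : darts D1); split.
- split=> //.
  + by case=> [[c i]|[p b]] /=; rewrite ?addbN // -iterSr.
  + by move=> c i; exists (fC c), (iter (r c) rot4 i).
  + by move=> p b; exists (fP p), (s p (+) b).
- case=> [[c i]|[p b]] /=; last by rewrite KP1 addKb.
  by rewrite KC1 -iterD addnC -mulSn iter_rot4_4.
- case=> [[c i]|[p b]] /=; last by rewrite KP2 addKb.
  by rewrite KC2 -iterD -mulSn iter_rot4_4.
Qed.

Section DartIso.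
Variables (D1 D2 : diagram) (h : darts D1 -> darts D2).
Hypothesis hiso : dart_iso D1 D2 h.

Lemma dart_iso_crossing c i : exists c' i', dvirt D2 c' = dvirt D1 c /\
  forall k, h (inl (c, iter k rot4 i)) = inl (c', iter k rot4 i').
Proof.
case: hiso => Hs _ _ Hc _; case: (Hc c i) => c' [i' [E Ev]]; exists c', i'; split=> // k.
elim: k => //= k IH.
by change (h (sigma (inl (c, iter k rot4 i))) = sigma (inl (c', iter k rot4 i'))); rewrite Hs IH.
Qed.

Lemma dart_iso_point p : exists p' b', h (inr (p, false)) = inr (p', b') /\
  h (inr (p, true)) = inr (p', ~~ b').
Proof.
case: hiso => Hs _ _ _ Hp; case: (Hp p false) => p' [b' E]; exists p', b'; split=> //.
by change (h (sigma (inr (p, false))) = inr (p', ~~ b')); rewrite Hs E.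
Qed.

Lemma dart_iso_vhom : vhom D1 D2 (fun d => Gen (h d)).
Proof.
have [_ Ha Ho _ _] := hiso; apply: vhom_rels => /=.
- by move=> d; rewrite Ha; apply: rel_edge.
- move=> p; case: (dart_iso_point p) => p' [[|] [-> ->]].
    by apply: vc_sym; apply: rel_point.
  exact: rel_point.
- move=> c i Hv; case: (dart_iso_crossing c i) => c' [i' [Ev E]].
  by move: (E 0) (E 2) => /= -> ->; apply: rel_flat; rewrite Ev.
- move=> c i Hv H1 H2; case: (dart_iso_crossing c i) => c' [i' [Ev E]].
  move: (E 0) (E 1) (E 2) (E 3) (Ho (inl (c, i))) (Ho (inl (c, rot4 i))) => /= E0 E1 E2 E3.
  rewrite E0 E1 H1 H2 E2 E3 => O1 O2; rewrite -Ev in Hv.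
  by split; [apply: rel_virtS | apply: rel_virtT].
Qed.

Lemma dart_iso_inv h' : cancel h h' -> cancel h' h -> dart_iso D2 D1 h'.
Proof.
have [Hs Ha Ho Hc Hp] := hiso; move=> K1 K2; split.
- by move=> d; apply: (can_inj K1); rewrite Hs !K2.
- by move=> d; apply: (can_inj K1); rewrite Ha !K2.
- by move=> d; rewrite -Ho K2.
- move=> c' i'; case E: (h' (inl (c', i'))) => [[c i]|[p b]].
  + exists c, i; split => //; case: (Hc c i) => c2 [i2 [E2 V]].
    by move: E2; rewrite -E K2 => -[-> _]; rewrite V.
  + by case: (Hp p b) => p2 [b2]; rewrite -E K2.
- move=> p' b'; case E: (h' (inr (p', b'))) => [[c i]|[p b]]; last by exists p, b.
  by case: (Hc c i) => c2 [i2 [E2 V]]; move: E2; rewrite -E K2.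
Qed.

End DartIso.

Lemma dart_iso_vequiv D1 D2 h h' : dart_iso D1 D2 h -> cancel h h' -> cancel h' h -> vequiv D1 D2.
Proof.
move=> hiso K1 K2; exists (fun d => Gen (h d)), (fun d => Gen (h' d)); split.
- exact: dart_iso_vhom hiso.
- exact: dart_iso_vhom (dart_iso_inv hiso K1 K2).
- by move=> x /=; rewrite K1; apply: vc_refl.
- by move=> x /=; rewrite K2; apply: vc_refl.
Qed.

Definition coherent (D : diagram) : Prop :=
  [/\ forall d, dout D (dalpha D d) = ~~ dout D d,
      forall c i, dout D (inl (c, rot4 (rot4 i))) = ~~ dout D (inl (c, i)) &
      forall p, dout D (inr (p, true)) = ~~ dout D (inr (p, false))].

Lemma is_diagram_coherent D : is_diagram D -> coherent D.
Proof. by case=> _ _ H1 [H2 H3] _; split. Qed.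

Lemma dart_iso_coherent D1 D2 h : dart_iso D1 D2 h -> coherent D2 -> coherent D1.
Proof.
move=> hiso [O1 O2 O3]; have [_ Ha Ho _ _] := hiso; split.
- by move=> d; rewrite -!Ho Ha O1.
- move=> c i; case: (dart_iso_crossing hiso c i) => c' [i' [_ E]].
  by rewrite -!Ho; move: (E 0) (E 2) => /= -> ->; rewrite O2.
- move=> p; case: (dart_iso_point hiso p) => p' [b' [E0 E1]].
  by rewrite -!Ho E0 E1; case: b' {E0 E1} => /=; rewrite O3 ?negbK.
Qed.

(** * Capped tangles and gluing *)

Section Capped.
Variables (n : nat) (T : tangle n).

Definition cap_dart (y : (dart (tC T) (tP T) + 'I_n)%type) : dart (tC T) (tP T + 'I_n) :=
  match y with
  | inl (inl (c, i)) => inl (c, i)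
  | inl (inr (p, b)) => inr (inl p, b)
  | inr j => inr (inr j, true)
  end.

Definition cap_alpha (ta : (dart (tC T) (tP T) + 'I_n)%type -> (dart (tC T) (tP T) + 'I_n)%type)
    (d : dart (tC T) (tP T + 'I_n)) : dart (tC T) (tP T + 'I_n) :=
  match d with
  | inl (c, i) => cap_dart (ta (inl (inl (c, i))))
  | inr (inl p, b) => cap_dart (ta (inl (inr (p, b))))
  | inr (inr j, true) => cap_dart (ta (inr j))
  | inr (inr j, false) => inr (inr j, false)
  end.

Definition cap_bd (j : 'I_n) : dart (tC T) (tP T + 'I_n) := inr (inr j, false).

Variable o : (dart (tC T) (tP T) + 'I_n)%type -> bool.

Definition cap_out (d : dart (tC T) (tP T + 'I_n)) : bool :=
  match d with
  | inl (c, i) => o (inl (inl (c, i)))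
  | inr (inl p, b) => o (inl (inr (p, b)))
  | inr (inr j, true) => o (inr j)
  | inr (inr j, false) => ~~ o (inr j)
  end.

(* The tangle closed off inside its disk: boundary point [j] becomes a
   2-valent point whose outer dart [cap_bd j] is its own [dalpha]-image. *)
Definition capped : diagram :=
  @Diagram (tC T) (tP T + 'I_n)%type (tvirt T) (cap_alpha (talpha T)) cap_out.
End Capped.
Arguments capped {n} T o.
Arguments cap_bd {n} T j.

Definition local_equiv n (T T' : tangle n) o o' : Prop :=
  exists (phi : darts (capped T o) -> term (darts (capped T' o')))
         (psi : darts (capped T' o') -> term (darts (capped T o))),
  [/\ (forall j, phi (cap_bd T j) = Gen (cap_bd T' j) /\ psi (cap_bd T' j) = Gen (cap_bd T j)),
      vhom (capped T o) (capped T' o') phi, vhom (capped T' o') (capped T o) psi,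
      (forall x, @vcong (capped T o) (tsub psi (phi x)) (Gen x)) &
      (forall y, @vcong (capped T' o') (tsub phi (psi y)) (Gen y))].
Arguments local_equiv {n} T T' o o'.

Lemma local_equiv_sym n (T T' : tangle n) o o' : local_equiv T T' o o' -> local_equiv T' T o' o.
Proof. by case=> phi [psi [Hb ? ? ? ?]]; exists psi, phi; split => // j; case: (Hb j). Qed.

Section Glue.
Variables (n : nat) (O : tangle n) (oO : (dart (tC O) (tP O) + 'I_n)%type -> bool).

Definition cap_emb (T : tangle n) (d : dart (tC T) (tP T + 'I_n)) : dart (gC O T) (gP O T) :=
  match d with
  | inl (c, i) => inl (inr c, i)
  | inr (inl p, b) => inr (inl (inr p), b)
  | inr (inr j, b) => inr (inr j, b)
  end.

Lemma cap_emb_dart (T : tangle n) (y : (dart (tC T) (tP T) + 'I_n)%type) : cap_emb (cap_dart y) = embT O y.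
Proof. by case: y => [[[c i]|[p b]]|j]. Qed.

Lemma glue_alpha_embO (T : tangle n) y : galpha (embO T y) = embO T (talpha O y).
Proof. by case: y => [[[c i]|[p b]]|j]. Qed.

Lemma glue_dartP (T : tangle n) (x : dart (gC O T) (gP O T)) :
  (exists y, x = embO T y) \/ (exists d, x = cap_emb d).
Proof.
case: x => [[[c|c] i]|[[[p|p]|j] [|]]].
- by left; exists (inl (inl (c, i))).
- by right; exists (inl (c, i)).
- by left; exists (inl (inr (p, true))).
- by left; exists (inl (inr (p, false))).
- by right; exists (inr (inl p, true)).
- by right; exists (inr (inl p, false)).
- by right; exists (inr (inr j, true)).
- by left; exists (inr j).
Qed.

Lemma cap_emb_vhom (T : tangle n) oT :
  vhom (capped T oT) (glue n O oO T oT) (fun d => Gen (cap_emb d)).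
Proof.
apply: vhom_rels.
- case=> [[c i]|[[p|j] [|]]] /=; rewrite ?cap_emb_dart; last exact: vc_refl.
  + exact: (@rel_edge (glue n O oO T oT) (inl (inr c, i))).
  + exact: (@rel_edge (glue n O oO T oT) (inr (inl (inr p), true))).
  + exact: (@rel_edge (glue n O oO T oT) (inr (inl (inr p), false))).
  + exact: (@rel_edge (glue n O oO T oT) (inr (inr j, true))).
- case=> [p|j].
  + exact: (@rel_point (glue n O oO T oT) (inl (inr p))).
  + exact: (@rel_point (glue n O oO T oT) (inr j)).
- by move=> c i H; apply: (@rel_flat (glue n O oO T oT) (inr c) i).
- move=> c i H1 H2 H3; split.
  + exact: (@rel_virtS (glue n O oO T oT) (inr c) i).
  + exact: (@rel_virtT (glue n O oO T oT) (inr c) i).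
Qed.

Variables (T T' : tangle n) (oT : (dart (tC T) (tP T) + 'I_n)%type -> bool)
          (oT' : (dart (tC T') (tP T') + 'I_n)%type -> bool).

Definition glue_subst (phi : darts (capped T oT) -> term (darts (capped T' oT')))
  (x : dart (gC O T) (gP O T)) : term (dart (gC O T') (gP O T')) :=
  match x with
  | inl (inl c, i) => Gen (inl (inl c, i))
  | inl (inr c, i) => tsub (fun d => Gen (cap_emb d)) (phi (inl (c, i)))
  | inr (inl (inl p), b) => Gen (inr (inl (inl p), b))
  | inr (inl (inr p), b) => tsub (fun d => Gen (cap_emb d)) (phi (inr (inl p, b)))
  | inr (inr j, b) => tsub (fun d => Gen (cap_emb d)) (phi (inr (inr j, b)))
  end.

Variable phi : darts (capped T oT) -> term (darts (capped T' oT')).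
Hypothesis phi_bd : forall j, phi (cap_bd T j) = Gen (cap_bd T' j).

Lemma glue_subst_emb d : glue_subst phi (cap_emb d) = tsub (fun d => Gen (cap_emb d)) (phi d).
Proof. by case: d => [[c i]|[[p|j] b]]. Qed.

Lemma glue_subst_embO y : glue_subst phi (embO T y) = Gen (embO T' y).
Proof. by case: y => [[[c i]|[p b]]|j] //=; rewrite phi_bd. Qed.

Lemma glue_subst_vhom : vhom (capped T oT) (capped T' oT') phi ->
  vhom (glue n O oO T oT) (glue n O oO T' oT') (glue_subst phi).
Proof.
move=> Hphi.
have inner t u : @vcong (capped T oT) t u -> @vcong (glue n O oO T' oT')
    (tsub (fun d => tsub (fun d => Gen (cap_emb d)) (phi d)) t)
    (tsub (fun d => tsub (fun d => Gen (cap_emb d)) (phi d)) u).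
  by move=> H; rewrite -!tsub_comp; apply/cap_emb_vhom/Hphi.
have outer y : @vcong (glue n O oO T' oT')
    (glue_subst phi (embO T y)) (glue_subst phi (galpha (embO T y))).
  by rewrite glue_alpha_embO !glue_subst_embO -glue_alpha_embO; apply: rel_edge.
apply: vhom_rels.
- move=> x; case: (glue_dartP x) => [[y ->]|[d ->]]; first exact: outer.
  case: d => [[c i]|[[p|j] [|]]]; last exact: (outer (inr j));
    by rewrite /= -cap_emb_dart !glue_subst_emb; apply: (inner _ _ (@rel_edge (capped T oT) _)).
- case=> [[p|p]|j].
  + exact: (@rel_point (glue n O oO T' oT') (inl (inl p))).
  + exact: (inner _ _ (@rel_point (capped T oT) (inl p))).
  + by have := inner _ _ (@rel_point (capped T oT) (inr j)); rewrite /= phi_bd.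
- case=> c i H; first exact: (@rel_flat (glue n O oO T' oT') (inl c) i).
  exact: (inner _ _ (@rel_flat (capped T oT) c i H)).
- case=> c i H1 H2 H3; split.
  + exact: (@rel_virtS (glue n O oO T' oT') (inl c) i).
  + exact: (@rel_virtT (glue n O oO T' oT') (inl c) i).
  + exact: (inner _ _ (@rel_virtS (capped T oT) c i H1 H2 H3)).
  + exact: (inner _ _ (@rel_virtT (capped T oT) c i H1 H2 H3)).
Qed.
End Glue.

Lemma glue_substK n (O : tangle n) oO (T T' : tangle n) oT oT' phi psi :
  (forall j, phi (cap_bd T j) = Gen (cap_bd T' j)) ->
  (forall j, psi (cap_bd T' j) = Gen (cap_bd T j)) ->
  (forall x, @vcong (capped T oT) (tsub psi (phi x)) (Gen x)) ->
  forall x, @vcong (glue n O oO T oT)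
    (tsub (@glue_subst n O T' T oT' oT psi) (@glue_subst n O T T' oT oT' phi x)) (Gen x).
Proof.
move=> Hphi Hpsi K x; case: (glue_dartP x) => [[y ->]|[d ->]].
  by rewrite glue_subst_embO //= glue_subst_embO //; apply: vc_refl.
rewrite glue_subst_emb tsub_comp
  (@eq_tsub _ _ _ (fun z => tsub (fun d => Gen (cap_emb O d)) (psi z))).
  by rewrite -(tsub_comp psi); apply: (cap_emb_vhom oO (K d)).
by move=> z; rewrite /= glue_subst_emb.
Qed.

Lemma glue_vequiv n (O : tangle n) oO (T T' : tangle n) oT oT' :
  local_equiv T T' oT oT' -> vequiv (glue n O oO T oT) (glue n O oO T' oT').
Proof.
case=> phi [psi [Hb Hphi Hpsi K1 K2]].
have Hb1 j : phi (cap_bd T j) = Gen (cap_bd T' j) by case: (Hb j).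
have Hb2 j : psi (cap_bd T' j) = Gen (cap_bd T j) by case: (Hb j).
exists (glue_subst phi), (glue_subst psi); split; try exact: glue_subst_vhom.
- exact: glue_substK.
- exact: glue_substK.
Qed.

(** * Deciding the defining congruence *)

(* [rot4], [inord] and [insub] go through the opaque [idP], on which
   [vm_compute] blocks; the following variants compute. *)
Definition ord4 (y : nat) : 'I_4 := Ordinal (ltn_pmod y (ltn0Sn 3)).

Definition rot4c (i : 'I_4) : 'I_4 := ord4 i.+1.

Lemma rot4E : rot4 = rot4c.
Proof. by apply: functional_extensionality => i; apply: val_inj; rewrite val_rot4. Qed.

Definition insub_ord (m x : nat) : option 'I_m :=
  if x < m then (if m is m'.+1 then Some (@Ordinal m'.+1 (x %% m'.+1) (ltn_pmod _ (ltn0Sn m'))) else None)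
  else None.

Lemma insub_ordE m x : insub_ord m x = insub x.
Proof.
rewrite /insub_ord; case: ltnP => H; last by rewrite insubF // ltnNge H.
by rewrite insubT; case: m H => // m H; congr Some; apply: val_inj; rewrite /= modn_small.
Qed.

Definition ord_seq (m : nat) : seq 'I_m := pmap (insub_ord m) (iota 0 m).

Lemma mem_ord_seq m (i : 'I_m) : i \in ord_seq m.
Proof.
rewrite mem_pmap; apply/mapP; exists (val i); first by rewrite mem_iota /= add0n.
by rewrite insub_ordE valK.
Qed.

Definition dart_seq (C P : eqType) (lc : seq C) (lp : seq P) : seq (dart C P) :=
  [seq inl (c, i) | c <- lc, i <- ord_seq 4] ++ [seq inr (p, b) | p <- lp, b <- [:: false; true]].

Lemma mem_dart_seq (C P : eqType) lc lp (d : dart C P) :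
  (forall c, c \in lc) -> (forall p, p \in lp) -> d \in dart_seq lc lp.
Proof.
move=> Hc Hp; rewrite mem_cat; case: d => [[c i]|[p b]]; apply/orP.
- by left; apply/allpairsP; exists (c, i); rewrite /= Hc mem_ord_seq.
- by right; apply/allpairsP; exists (p, b); rewrite /= Hp; case: b.
Qed.

Record cdiagram (D : diagram) := CDiagram {
  cd_crossings : seq (dC D);
  cd_points : seq (dP D);
  cd_alpha : darts D -> darts D;
  cd_out : darts D -> bool;
  cd_virt : dC D -> bool }.

Definition cd_darts D (X : cdiagram D) := dart_seq (cd_crossings X) (cd_points X).

Definition cd_valid D (X : cdiagram D) : Prop :=
  [/\ forall c, c \in cd_crossings X, forall p, p \in cd_points X,
      dalpha D =1 cd_alpha X, dout D =1 cd_out X & dvirt D =1 cd_virt X].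

Section Expansion.
Variables (D : diagram) (X : cdiagram D).
Hypothesis Xvalid : cd_valid X.
Notation "a ~~> b" := (@vcong D a b) (at level 70).
Notation ou := (cd_out X).

(* Virtual crossing [c] has outgoing lower-right (resp. lower-left) dart [k]. *)
Definition is_lr c k := ~~ ou (inl (c, rot4c (rot4c k))) && ou (inl (c, rot4c (rot4c (rot4c k)))).
Definition is_ll c k := ~~ ou (inl (c, rot4c (rot4c (rot4c k)))) && ou (inl (c, k)).

(* Walks backwards along the v-arc of [x], rewriting the outgoing darts of
   virtual crossings by their defining relations; [f] is fuel. *)
Fixpoint vexpand (f : nat) (x : darts D) : term (darts D) :=
  if f is f'.+1 then
    match x with
    | inl (c, k) =>
      if ~~ ou x then vexpand f' (cd_alpha X x)
      else if ~~ cd_virt X c then vexpand f' (inl (c, rot4c (rot4c k)))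
      else if is_lr c k then
        Star (vexpand f' (inl (c, rot4c (rot4c k)))) (Gen (troot (vexpand f' (inl (c, rot4c k)))))
      else if is_ll c k then
        Circ (vexpand f' (inl (c, rot4c (rot4c k))))
             (Gen (troot (vexpand f' (inl (c, rot4c (rot4c (rot4c k)))))))
      else Gen x
    | inr (p, b) => if ~~ ou x then vexpand f' (cd_alpha X x) else vexpand f' (inr (p, ~~ b))
    end
  else Gen x.

Lemma vc_lr c k : cd_virt X c -> is_lr c k ->
  Gen (inl (c, k)) ~~> Star (Gen (inl (c, rot4c (rot4c k)))) (Gen (inl (c, rot4c k))).
Proof.
case: Xvalid => _ _ _ Ho Hv; rewrite /is_lr -!rot4E -!Ho -Hv => V /andP [H1 H2].
by have := @rel_virtS D c (rot4 (rot4 k)) V (negbTE H1) H2; rewrite !rot4_4.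
Qed.

Lemma vc_ll c k : cd_virt X c -> is_ll c k ->
  Gen (inl (c, k)) ~~> Circ (Gen (inl (c, rot4c (rot4c k)))) (Gen (inl (c, rot4c (rot4c (rot4c k))))).
Proof.
case: Xvalid => _ _ _ Ho Hv; rewrite /is_ll -!rot4E -!Ho -Hv => V /andP [H1 H2].
rewrite -[in dout _ _](rot4_4 k) in H2.
by have := @rel_virtT D c (rot4 (rot4 (rot4 k))) V (negbTE H1) H2; rewrite !rot4_4.
Qed.

Lemma vexpand_sound f x : Gen x ~~> vexpand f x.
Proof.
case: Xvalid => _ _ Ha _ Hv.
elim: f x => [|f IH] x /=; first exact: vc_refl.
have step y : Gen x ~~> Gen y -> Gen x ~~> vexpand f y by move=> H; apply: vc_trans H (IH y).
case: x step => [[c k]|[p b]] step.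
- case: ifP => _; first by apply: step; rewrite -Ha; apply: rel_edge.
  case: ifPn => [V|/negPn V].
    by apply: step; rewrite -rot4E; apply: rel_flat; rewrite Hv; apply: negbTE.
  case: ifP => L.
    apply: vc_trans (vc_lr V L) (vc_trans (vc_starl _ (IH _)) _).
    by case: (vc_op_arg (vexpand f (inl (c, rot4c (rot4c k)))) (IH (inl (c, rot4c k)))).
  case: ifP => L'; last exact: vc_refl.
  apply: vc_trans (vc_ll V L') (vc_trans (vc_circl _ (IH _)) _).
  by case: (vc_op_arg (vexpand f (inl (c, rot4c (rot4c k)))) (IH (inl (c, rot4c (rot4c (rot4c k)))))).
- case: ifP => _; first by apply: step; rewrite -Ha; apply: rel_edge.
  apply: step; case: b; [apply: vc_sym |]; exact: rel_point.
Qed.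
End Expansion.

Definition vcongb D (X : cdiagram D) F (a b : term (darts D)) : bool :=
  nf_eqb (cd_darts X) (tsub (vexpand X F) a) (tsub (vexpand X F) b).

Lemma vcongbP D (X : cdiagram D) F a b : cd_valid X -> vcongb X F a b -> vcong a b.
Proof.
move=> V H; have [Hc Hp _ _ _] := V.
apply: vc_trans (vc_tsub a (vexpand_sound V F)) (vc_sym _).
apply: vc_trans (vc_tsub b (vexpand_sound V F)) (vc_sym _).
by apply: nf_eqb_sound H => h; apply: mem_dart_seq.
Qed.

Section SubstitutionCheck.
Variables (D1 D2 : diagram) (X1 : cdiagram D1) (X2 : cdiagram D2) (F : nat).
Variable phi : darts D1 -> term (darts D2).

Definition vhom_check : bool :=
  let ch := vcongb X2 F in
  [&& all (fun d => ch (phi d) (phi (cd_alpha X1 d))) (cd_darts X1),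
      all (fun p => ch (phi (inr (p, false))) (phi (inr (p, true)))) (cd_points X1),
      all (fun c => all (fun i => if cd_virt X1 c then true else
          ch (phi (inl (c, i))) (phi (inl (c, rot4c (rot4c i))))) (ord_seq 4)) (cd_crossings X1) &
      all (fun c => all (fun i =>
         if cd_virt X1 c && ~~ cd_out X1 (inl (c, i)) && cd_out X1 (inl (c, rot4c i)) then
           ch (phi (inl (c, rot4c (rot4c i))))
              (Star (phi (inl (c, i))) (phi (inl (c, rot4c (rot4c (rot4c i))))))
           && ch (phi (inl (c, rot4c i))) (Circ (phi (inl (c, rot4c (rot4c (rot4c i))))) (phi (inl (c, i))))
         else true)
         (ord_seq 4)) (cd_crossings X1)].

Lemma vhom_checkP : cd_valid X1 -> cd_valid X2 -> vhom_check -> vhom D1 D2 phi.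
Proof.
move=> [Hc Hp Ha Ho Hv] V2 /and4P [/allP He /allP Hpp /allP Hf /allP Hvv].
have C a b : vcongb X2 F a b -> vcong a b by apply: vcongbP.
apply: vhom_rels.
- by move=> d; rewrite Ha; apply/C/He/mem_dart_seq.
- by move=> p; apply/C/Hpp.
- move=> c i H; have := allP (Hf c (Hc c)) i (mem_ord_seq i).
  by rewrite -Hv H /= -rot4E; apply: C.
- move=> c i H1 H2 H3; have := allP (Hvv c (Hc c)) i (mem_ord_seq i).
  by rewrite -Hv -!Ho -!rot4E H1 H2 H3 /= => /andP [K1 K2]; split; apply: C.
Qed.

Variable psi : darts D2 -> term (darts D1).

Definition inverse_check : bool :=
  all (fun x => vcongb X1 F (tsub psi (phi x)) (Gen x)) (cd_darts X1).

Lemma inverse_checkP : cd_valid X1 -> inverse_check ->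
  forall x, @vcong D1 (tsub psi (phi x)) (Gen x).
Proof.
move=> V1 /allP H x; apply: (vcongbP V1); apply: H.
by case: V1 => Hc Hp _ _ _; apply: mem_dart_seq.
Qed.
End SubstitutionCheck.
Arguments vhom_check : clear implicits.
Arguments inverse_check : clear implicits.

(** * Local equivalence of the standard moves *)

Fixpoint bitlists (m : nat) : seq (seq bool) :=
  if m is m'.+1 then [seq b :: l | b <- [:: false; true], l <- bitlists m'] else [:: [::]].

Lemma mem_bitlists (l : seq bool) : l \in bitlists (size l).
Proof.
elim: l => [|b l IH] //.
change (b :: l \in [seq x :: y | x <- [:: false; true], y <- bitlists (size l)]).
by apply/allpairsP; exists (b, l); rewrite /= IH; case: b.
Qed.

Lemma bitlists_cover n (f : 'I_n -> bool) :
  exists2 l, l \in bitlists n & forall j : 'I_n, nth false l j = f j.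
Proof.
set l := mkseq (fun i => odflt false (omap f (insub_ord n i))) n.
exists l; first by have := mem_bitlists l; rewrite size_mkseq.
by move=> j; rewrite nth_mkseq // insub_ordE valK.
Qed.

Section LocalCheck.
Variables (n : nat) (j0 : 'I_n) (F : nat).

Definition cap_cdiagram (T : tangle n) (lc : seq (tC T)) (lp : seq (tP T)) ta o : cdiagram (capped T o) :=
  @CDiagram (capped T o) lc ([seq inl p | p <- lp] ++ [seq inr j | j <- ord_seq n])
    (cap_alpha ta) (cap_out o) (tvirt T).

Lemma cap_cdiagram_valid (T : tangle n) lc lp ta o :
  (forall c, c \in lc) -> (forall p, p \in lp) -> talpha T =1 ta ->
  cd_valid (@cap_cdiagram T lc lp ta o).
Proof.
move=> Hc Hp Ht; split=> //.
- by case=> [p|j]; rewrite /= mem_cat; apply/orP; [left | right]; apply/mapP;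
    [exists p | exists j; first exact: mem_ord_seq].
- by case=> [[c i]|[[p|j] [|]]] //=; rewrite Ht.
Qed.

Definition transport_bd (T T' : tangle n) (g : dart (tC T) (tP T + 'I_n)) : dart (tC T') (tP T' + 'I_n) :=
  match g with
  | inr (inr j, b) => inr (inr j, b)
  | _ => cap_bd T' j0
  end.

(* The expansion of a dart ends at outer boundary darts only, which are
   common to both capped tangles; other generators are sent to a junk value. *)
Definition candidate (T T' : tangle n) o (X : cdiagram (capped T o))
    (x : darts (capped T o)) : term (dart (tC T') (tP T' + 'I_n)) :=
  match x with
  | inr (inr j, false) => Gen (cap_bd T' j)
  | _ => tsub (fun g => Gen (transport_bd T' g)) (vexpand X F x)
  end.

Definition local_check (T T' : tangle n) o o' (X : cdiagram (capped T o)) (X' : cdiagram (capped T' o')) :=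
  [&& vhom_check (capped T o) (capped T' o') X X' F (candidate T' X),
      vhom_check (capped T' o') (capped T o) X' X F (candidate T X'),
      inverse_check (capped T o) (capped T' o') X F (candidate T' X) (candidate T X') &
      inverse_check (capped T' o') (capped T o) X' F (candidate T X') (candidate T' X)].

Lemma local_checkP (T T' : tangle n) o o' X X' : cd_valid X -> cd_valid X' ->
  @local_check T T' o o' X X' -> local_equiv T T' o o'.
Proof.
move=> V V' /and4P [H1 H2 H3 H4].
by exists (candidate T' X), (candidate T X'); split;
  [| exact: vhom_checkP H1 | exact: vhom_checkP H2
   | exact: inverse_checkP H3 | exact: inverse_checkP H4].
Qed.

Definition tangle_coherent (T : tangle n) (o : (dart (tC T) (tP T) + 'I_n)%type -> bool) : Prop :=
  [/\ forall d, o (talpha T d) = ~~ o d,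
      forall c i, o (inl (inl (c, rot4 (rot4 i)))) = ~~ o (inl (inl (c, i))) &
      forall p, o (inl (inr (p, true))) = ~~ o (inl (inr (p, false)))].

Definition tangle_darts (T : tangle n) (lc : seq (tC T)) (lp : seq (tP T)) :=
  [seq inl d | d <- dart_seq lc lp] ++ [seq inr j | j <- ord_seq n].

Definition tangle_coherentb (T : tangle n) lc lp ta (o : (dart (tC T) (tP T) + 'I_n)%type -> bool) :=
  [&& all (fun d => o (ta d) (+) o d) (@tangle_darts T lc lp),
      all (fun c => all (fun i => o (inl (inl (c, rot4c (rot4c i)))) (+) o (inl (inl (c, i))))
        (ord_seq 4)) lc &
      all (fun p => o (inl (inr (p, true))) (+) o (inl (inr (p, false)))) lp].

Lemma tangle_coherentb_complete (T : tangle n) lc lp ta o :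
  talpha T =1 ta -> @tangle_coherent T o -> @tangle_coherentb T lc lp ta o.
Proof.
move=> Ht [H1 H2 H3]; apply/and3P; split.
- by apply/allP => d _; rewrite -Ht H1 addNb addbb.
- by apply/allP => c _; apply/allP => i _; rewrite -rot4E H2 addNb addbb.
- by apply/allP => p _; rewrite H3 addNb addbb.
Qed.

Fixpoint strand_end (T : tangle n) ta (f : nat) (w : (dart (tC T) (tP T) + 'I_n)%type) : option 'I_n :=
  if f is f'.+1 then
    match ta w with
    | inr j => Some j
    | inl (inl (c, i)) => strand_end ta f' (inl (inl (c, rot4c (rot4c i))))
    | inl (inr (p, b)) => strand_end ta f' (inl (inr (p, ~~ b)))
    end
  else None.

Lemma strand_end_out (T : tangle n) ta o f w j : talpha T =1 ta -> @tangle_coherent T o ->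
  strand_end ta f w = Some j -> o w = ~~ o (inr j).
Proof.
move=> Ht [H1 H2 H3]; elim: f w => [|f IH] w //=.
case E: (ta w) => [[[c i]|[p b]]|j'].
- by move/IH => <-; rewrite -rot4E H2 -E -Ht H1 negbK.
- move/IH => <-; case: b E => E /=.
  + by rewrite -(negbK (o (inl (inr (p, false))))) -H3 -E -Ht H1 negbK.
  + by rewrite H3 -E -Ht H1 negbK.
- by case=> <-; rewrite -E -Ht H1 negbK.
Qed.

Definition all_strands_end (T : tangle n) (lc : seq (tC T)) (lp : seq (tP T)) ta : bool :=
  all (fun x => strand_end ta F (inl x) != None) (dart_seq lc lp).

(* Junk [false] on strands that do not reach the boundary, see [all_strands_end]. *)
Definition bd_orient (T : tangle n) ta (bb : 'I_n -> bool) (x : (dart (tC T) (tP T) + 'I_n)%type) :=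
  match x with
  | inr j => bb j
  | inl _ => if @strand_end T ta F x is Some j then ~~ bb j else false
  end.

Lemma bd_orientE (T : tangle n) lc lp ta o : (forall c, c \in lc) -> (forall p, p \in lp) ->
  talpha T =1 ta -> @tangle_coherent T o -> all_strands_end lc lp ta ->
  forall bb, (forall j, bb j = o (inr j)) -> o =1 bd_orient ta bb.
Proof.
move=> Hc Hp Ht Hco /allP He bb Hb [x|j] /=; last by rewrite Hb.
have := He x (mem_dart_seq x Hc Hp); case E: (strand_end ta F (inl x)) => [j|] // _.
by rewrite Hb (strand_end_out Ht Hco E).
Qed.

(* The guards here and in [vhom_check] are [if]s rather than [==>]:
   [vm_compute] evaluates both arguments of [implb], and [local_check] is
   only cheap (and only meaningful) for coherent orientations. *)
Definition move_check (T T' : tangle n) lc lp ta lc' lp' ta' : bool :=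
  [&& @all_strands_end T lc lp ta, @all_strands_end T' lc' lp' ta' &
  all (fun l =>
    let o := bd_orient ta (fun j => nth false l j) in
    let o' := bd_orient ta' (fun j => nth false l j) in
    if @tangle_coherentb T lc lp ta o && @tangle_coherentb T' lc' lp' ta' o' then
      @local_check T T' o o' (cap_cdiagram lc lp ta o) (cap_cdiagram lc' lp' ta' o')
    else true)
   (bitlists n)].

Lemma move_checkP (T T' : tangle n) lc lp ta lc' lp' ta' o o' :
  (forall c, c \in lc) -> (forall p, p \in lp) -> talpha T =1 ta ->
  (forall c, c \in lc') -> (forall p, p \in lp') -> talpha T' =1 ta' ->
  @move_check T T' lc lp ta lc' lp' ta' -> @tangle_coherent T o -> @tangle_coherent T' o' ->
  (forall j, o (inr j) = o' (inr j)) -> local_equiv T T' o o'.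
Proof.
move=> Hc Hp Ht Hc' Hp' Ht' /and3P [A1 A2 /allP B] C1 C2 Eb.
case: (bitlists_cover (fun j => o (inr j))) => l Hl Hn.
have /functional_extensionality E1 := bd_orientE Hc Hp Ht C1 A1 Hn.
have /functional_extensionality E2 : o' =1 bd_orient ta' (fun j => nth false l j).
  by apply: (bd_orientE Hc' Hp' Ht' C2 A2) => j; rewrite Hn Eb.
have := B l Hl; rewrite /= -E1 -E2.
rewrite !(tangle_coherentb_complete _ _ Ht) ?(tangle_coherentb_complete _ _ Ht') //=.
by apply: local_checkP; apply: cap_cdiagram_valid.
Qed.
End LocalCheck.

Definition decode_c k n (y : nat) : option (dart 'I_k 'I_0 + 'I_n)%type :=
  if y < 4 * k then omap (fun c : 'I_k => inl (inl (c, ord4 y))) (insub_ord k (y %/ 4))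
  else omap (fun j : 'I_n => inr j) (insub_ord n (y - 4 * k)).

Lemma decode_cE k n y : @decode k n y = decode_c k n y.
Proof.
rewrite /decode /decode_c !insub_ordE; case: ifP => // _.
suff -> : inord (y %% 4) = ord4 y by [].
by apply: val_inj; rewrite /= inordK // ltn_pmod.
Qed.

Definition table_alpha k n (s : seq (nat * nat)) (d : (dart 'I_k 'I_0 + 'I_n)%type) :=
  odflt d (obind (decode_c k n) (partner s (code d))).

Lemma talpha_table k n kind s : talpha (@table_tangle k n kind s) =1 table_alpha s.
Proof.
move=> d; rewrite /= /table_alpha; case: (partner s (code d)) => //= y.
by rewrite decode_cE.
Qed.

Definition refl4c (i : 'I_4) : 'I_4 := ord4 (4 - i).

Definition mref_c n (C P : Type) (d : (dart C P + 'I_n)%type) : (dart C P + 'I_n)%type :=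
  if d is inl (inl (c, i)) then inl (inl (c, refl4c i)) else d.

Lemma mref_cE n (C P : Type) : @mref n C P =1 @mref_c n C P.
Proof.
case=> [[[c i]|[p b]]|j] //=; congr (inl (inl (c, _))).
by apply: val_inj; rewrite /= inordK // ltn_pmod.
Qed.

Lemma refl4K (i : 'I_4) : refl4 (refl4 i) = i.
Proof.
apply: val_inj; rewrite /refl4 /= !inordK ?ltn_pmod //.
by case: i => [[|[|[|[|m]]]] Hm].
Qed.

Lemma mirrorK n (T : tangle n) : mirror (mirror T) = T.
Proof.
have mrefK (d : (dart (tC T) (tP T) + 'I_n)%type) : mref (mref d) = d.
  by case: d => [[[c i]|[p b]]|j] //=; rewrite refl4K.
case: T mrefK => C P v a mrefK; rewrite /mirror /=; congr Tangle.
by apply: functional_extensionality => d; rewrite !mrefK.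
Qed.

Definition mirror_if n (m : bool) (T : tangle n) : tangle n := if m then mirror T else T.

Lemma move_pair_std n (T T' : tangle n) : move_pair T T' ->
  exists (S S' : tangle n) (m : bool), std_move S S' /\
    ((T = mirror_if m S /\ T' = mirror_if m S') \/ (T = mirror_if m S' /\ T' = mirror_if m S)).
Proof.
elim=> {n T T'}.
- by move=> n T T' H; exists T, T', false; split => //; left.
- move=> n T T' _ [S [S' [m [H [[-> ->]|[-> ->]]]]]]; exists S, S', m; split => //.
  + by right.
  + by left.
- move=> n T T' _ [S [S' [m [H [[-> ->]|[-> ->]]]]]]; exists S, S', (~~ m); split => //.
  + by left; case: m; rewrite /mirror_if /= ?mirrorK.
  + by right; case: m; rewrite /mirror_if /= ?mirrorK.
Qed.

Definition mirror_alpha n (C P : Type) (ta : (dart C P + 'I_n)%type -> (dart C P + 'I_n)%type) :=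
  fun d => mref_c (ta (mref_c d)).

Lemma talpha_mirror n (T : tangle n) ta : talpha T =1 ta -> talpha (mirror T) =1 mirror_alpha ta.
Proof. by move=> H d; rewrite /= !mref_cE H. Qed.

Section TableMoves.
Variables (k k' n : nat) (j0 : 'I_n) (F : nat) (kind : 'I_k -> bool) (kind' : 'I_k' -> bool).
Variables (s s' : seq (nat * nat)).
Let T := table_tangle n kind s.
Let T' := table_tangle n kind' s'.

Lemma table_local :
  @move_check n j0 F T T' (ord_seq k) (ord_seq 0) (table_alpha s)
     (ord_seq k') (ord_seq 0) (table_alpha s') ->
  forall o o', tangle_coherent o -> tangle_coherent o' -> (forall j, o (inr j) = o' (inr j)) ->
  local_equiv T T' o o'.
Proof.
move=> B o o' C1 C2 E.
apply: (move_checkP _ _ _ _ _ _ B C1 C2 E); by [apply: mem_ord_seq | apply: talpha_table].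
Qed.

Lemma mirror_table_local :
  @move_check n j0 F (mirror T) (mirror T') (ord_seq k) (ord_seq 0) (mirror_alpha (table_alpha s))
     (ord_seq k') (ord_seq 0) (mirror_alpha (table_alpha s')) ->
  forall o o', tangle_coherent o -> tangle_coherent o' -> (forall j, o (inr j) = o' (inr j)) ->
  local_equiv (mirror T) (mirror T') o o'.
Proof.
move=> B o o' C1 C2 E.
apply: (move_checkP _ _ _ _ _ _ B C1 C2 E);
  by [apply: mem_ord_seq | apply/talpha_mirror/talpha_table].
Qed.
End TableMoves.

Lemma std_move_local n (S S' : tangle n) (m : bool) : std_move S S' ->
  forall o o', tangle_coherent o -> tangle_coherent o' -> (forall j, o (inr j) = o' (inr j)) ->
  local_equiv (mirror_if m S) (mirror_if m S') o o'.
Proof.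
case: m => -[] {n S S'};
  (apply: (@mirror_table_local _ _ _ ord0 30) || apply: (@table_local _ _ _ ord0 30));
  by vm_compute.
Qed.

Lemma glue_alpha_embT n (O : tangle n) oO (T : tangle n) oT y :
  dalpha (glue n O oO T oT) (embT O y) = embT O (talpha T y).
Proof. by case: y => [[[c i]|[p b]]|j]. Qed.

Lemma glue_out_embT n (O : tangle n) oO (T : tangle n) oT y :
  dout (glue n O oO T oT) (embT O y) = oT y.
Proof. by case: y => [[[c i]|[p b]]|j]. Qed.

Lemma glue_coherent n (O : tangle n) oO (T : tangle n) oT :
  coherent (glue n O oO T oT) -> tangle_coherent oT.
Proof.
case=> O1 O2 O3; split.
- by move=> d; have := O1 (embT O d); rewrite glue_alpha_embT !glue_out_embT.
- by move=> c i; apply: (O2 (inr c) i).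
- by move=> p; apply: (O3 (inl (inr p))).
Qed.

Lemma glue_bd_out n (O : tangle n) oO (T : tangle n) oT j :
  coherent (glue n O oO T oT) -> oT (inr j) = ~~ oO (inr j).
Proof. by case=> _ _ O3; apply: (O3 (inr j)). Qed.

Lemma diag_iso_vequiv (L : diagram) n (O : tangle n) oO (T : tangle n) oT :
  is_diagram L -> diag_iso (glue n O oO T oT) L ->
  vequiv L (glue n O oO T oT) /\ coherent (glue n O oO T oT).
Proof.
move=> HL /diag_iso_dart [h [h' [H K1 K2]]]; split.
- exact/vequiv_sym/(dart_iso_vequiv H K1 K2).
- exact: dart_iso_coherent H (is_diagram_coherent HL).
Qed.

Theorem theorem4p3 (L L' : diagram) :
  is_diagram L -> is_diagram L' -> flat_move L L' ->
  vfb_iso (@vstar L) (@vcirc L) (@vstar L') (@vcirc L').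
Proof.
move=> HL HL' [n [O [T [T' [oO [oT [oT' [Hmp Hi Hi']]]]]]]].
case: (diag_iso_vequiv HL Hi) => V1 C1; case: (diag_iso_vequiv HL' Hi') => V2 C2.
apply: vequiv_iso; apply: (vequiv_trans V1); apply: vequiv_trans (vequiv_sym V2).
apply: glue_vequiv.
have E j : oT (inr j) = oT' (inr j) by rewrite (glue_bd_out j C1) (glue_bd_out j C2).
have [S [S' [m [Hs [[ET ET']|[ET ET']]]]]] := move_pair_std Hmp; subst T T'.
- exact: std_move_local Hs _ _ (glue_coherent C1) (glue_coherent C2) E.
- apply: local_equiv_sym; apply: std_move_local Hs _ _ (glue_coherent C2) (glue_coherent C1) _.
  by move=> j; rewrite E.
Qed.
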